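(* Let $H\subset\mathrm{PGL}(2,\mathbb{C})=\mathrm{Aut}(\mathbb{P}^1)$ be a finite subgroup and let $\Lambda\subset\mathbb{P}^1$ be a finite subset. The following are equivalent: (1) $\Lambda$ is non-empty and $H$-invariant; (2) there exists an $H$-equivariant morphism $\delta\colon\mathbb{P}^1\to\mathbb{P}^1$ (i.e. $\delta\circ h=h\circ\delta$ for all $h\in H$) such that $\Lambda=\{q\in\mathbb{P}^1\mid\delta(q)=q\}$.
   Context: $\mathrm{PGL}(2,\mathbb{C})$ acts on $\mathbb{P}^1$ in the standard way; morphisms are algebraic. *)

From HB Require Import structures.
From mathcomp Require Import all_boot all_order all_algebra.
Set Implicit Arguments. Unset Strict Implicit. Unset Printing Implicit Defensive.
Import GRing.Theory.
Local Open Scope ring_scope.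

Section P1.
Variable F : closedFieldType.

(* Points of P^1: [Some x] = [x : 1], [None] = [1 : 0] (the point at infinity). *)
Definition P1 := option F.

Definition coords (p : P1) : F * F := if p is Some x then (x, 1) else (1, 0).

Definition proj (v : F * F) : P1 := if v.2 == 0 then None else Some (v.1 / v.2).

(* A binary form of degree d, encoded by the univariate polynomial of its
   coefficients: hev d p (x,y) = sum_{i<=d} p_i x^i y^(d-i). *)
Definition hev (d : nat) (p : {poly F}) (v : F * F) : F :=
  \sum_(i < d.+1) p`_i * v.1 ^+ i * v.2 ^+ (d - i).

(* Algebraic morphisms P^1 -> P^1: [x : y] |-> [P(x,y) : Q(x,y)] with P, Q
   binary forms of the same degree d without common nontrivial zero. *)
Definition is_P1_morphism (f : P1 -> P1) : Prop :=
  exists (d : nat) (p q : {poly F}),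
    [/\ (size p <= d.+1)%N, (size q <= d.+1)%N,
        (forall v : F * F, v != (0, 0) -> (hev d p v, hev d q v) != (0, 0)) &
        forall z : P1, f z = proj (hev d p (coords z), hev d q (coords z))].

Definition mob (A : 'M[F]_2) (z : P1) : P1 :=
  let c := coords z in
  proj (A ord0 ord0 * c.1 + A ord0 ord_max * c.2,
        A ord_max ord0 * c.1 + A ord_max ord_max * c.2).

Definition pgl_eq (A B : 'M[F]_2) : Prop := exists c : F, c != 0 /\ A = c *: B.

(* A finite subgroup of PGL(2,F), given by a finite list of representatives
   in GL(2,F): it contains the identity and is closed under products and
   inverses (modulo scalars). *)
Definition finite_subgroup_PGL2 (H : seq 'M[F]_2) : Prop :=
  [/\ (forall A, A \in H -> A \in unitmx),
      (exists2 C, C \in H & pgl_eq 1%:M C),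
      (forall A B, A \in H -> B \in H -> exists2 C, C \in H & pgl_eq (A *m B) C) &
      (forall A, A \in H -> exists2 C, C \in H & pgl_eq (invmx A) C)].

End P1.

From HB Require Import structures.
From mathcomp Require Import all_boot all_order all_algebra.
From mathcomp Require Import ring.
Import GRing.Theory.
Local Open Scope ring_scope.

Set Implicit Arguments. Unset Strict Implicit. Unset Printing Implicit Defensive.

(* (2) => (1): a morphism P^1 -> P^1 of degree d has a fixed point, since the
   fixed points of [x:y] |-> [P:Q] are the zeros of the nonzero form xQ - yP of
   degree d+1 over an algebraically closed field; and the fixed locus of an
   H-equivariant map is H-invariant because Moebius maps are injective.

   (1) => (2): for distinct points l_1..l_n (n >= 1) with coordinate vectors
   u_1..u_n, the "Lagrange field"
       D(v) = sum_i (prod_{j <> i} [v, u_j]) u_i,     [v, w] = v.1 w.2 - v.2 w.1,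
   is a pair of binary forms of degree n-1 satisfying
       [v, D(v)] = n * prod_j [v, u_j].
   In characteristic 0 this shows that D never vanishes and that the map
   [v] |-> [D(v)] fixes exactly the l_i.  If the set {l_i} is invariant under
   a matrix A, then D(Av) is proportional to A D(v), so the map is
   equivariant. *)

Section HomogeneousCoordinates.
Variable F : closedFieldType.
Implicit Types (v w : F * F) (z : P1 F) (A : 'M[F]_2).

(* The bracket [v, w]: it vanishes iff v and w are proportional. *)
Definition det2 v w := v.1 * w.2 - v.2 * w.1.

Definition scalev (k : F) v := (k * v.1, k * v.2).

(* The coordinate used by [proj] to normalize a nonzero vector. *)
Definition normc v := if v.2 == 0 then v.1 else v.2.

Lemma pair_neq0 v : (v != (0, 0)) = (v.1 != 0) || (v.2 != 0).
Proof. by case: v => a b; rewrite xpair_eqE negb_and. Qed.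

Lemma coords_neq0 z : coords z != (0, 0).
Proof. by rewrite pair_neq0; case: z => [x|] /=; rewrite oner_eq0 ?orbT. Qed.

Lemma proj_coords z : proj (coords z) = z.
Proof. by case: z => [x|]; rewrite /proj /= ?oner_eq0 ?divr1 ?eqxx. Qed.

Lemma normc_neq0 v : v != (0, 0) -> normc v != 0.
Proof.
case: v => a b; rewrite pair_neq0 /normc /=.
by case: ifP => [_|/negbT //] /=; rewrite orbF.
Qed.

Lemma scalev_neq0 k v : k != 0 -> v != (0, 0) -> scalev k v != (0, 0).
Proof. by move=> k0; rewrite !pair_neq0 /scalev /= !mulf_eq0 (negbTE k0). Qed.

Lemma coords_proj v : v != (0, 0) -> v = scalev (normc v) (coords (proj v)).
Proof.
case: v => a b; rewrite pair_neq0 /normc /proj /scalev /=.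
case: ifP => [/eqP -> | /negbT b0] /=; first by rewrite mulr1 mulr0.
by rewrite mulr1 mulrC divfK.
Qed.

Lemma coords_proj_inv v :
  v != (0, 0) -> coords (proj v) = scalev (normc v)^-1 v.
Proof.
move=> v0; have := coords_proj v0; have := normc_neq0 v0.
move: (normc v) (coords (proj v)) => t [c1 c2] t0 ->.
by rewrite /scalev /= !mulrA mulVf // !mul1r.
Qed.

Lemma proj_scalev k v : k != 0 -> proj (scalev k v) = proj v.
Proof.
move=> k0; rewrite /proj /scalev /= mulf_eq0 (negbTE k0) /=.
by case: eqP => // /eqP b0; rewrite invfM mulrACA divff // mul1r.
Qed.

Lemma det2_scalel k v w : det2 (scalev k v) w = k * det2 v w.
Proof. by rewrite /det2 /scalev /=; ring. Qed.

Lemma det2_scaler k v w : det2 v (scalev k w) = k * det2 v w.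
Proof. by rewrite /det2 /scalev /=; ring. Qed.

Lemma det2C v w : det2 v w = - det2 w v.
Proof. by rewrite /det2; ring. Qed.

Lemma det2_coords z1 z2 : (det2 (coords z1) (coords z2) == 0) = (z1 == z2).
Proof.
case: z1 => [a|]; case: z2 => [b|];
  rewrite /det2 /= ?mulr1 ?mul1r ?mulr0 ?mul0r ?subr0 ?sub0r ?oppr_eq0 ?oner_eq0 //.
  by rewrite subr_eq0; apply/eqP/eqP => [-> // | [->]].
by rewrite !eqxx.
Qed.

Lemma proj_eq v w :
  v != (0, 0) -> w != (0, 0) -> proj v = proj w <-> det2 v w = 0.
Proof.
move=> v0 w0; rewrite [in det2 _ _](coords_proj v0) [in det2 _ _](coords_proj w0).
rewrite det2_scalel det2_scaler; split.
  by move=> ->; apply/eqP; rewrite !mulf_eq0 det2_coords eqxx !orbT.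
move/eqP; rewrite !mulf_eq0 (negbTE (normc_neq0 v0)) (negbTE (normc_neq0 w0)) /=.
by rewrite det2_coords => /eqP.
Qed.

End HomogeneousCoordinates.

Section LinearAction.
Variable F : closedFieldType.
Implicit Types (v w : F * F) (z : P1 F) (A B : 'M[F]_2).

Definition mxv A v :=
  (A ord0 ord0 * v.1 + A ord0 ord_max * v.2,
   A ord_max ord0 * v.1 + A ord_max ord_max * v.2).

Definition det22 A :=
  A ord0 ord0 * A ord_max ord_max - A ord0 ord_max * A ord_max ord0.

Lemma mobE A z : mob A z = proj (mxv A (coords z)).
Proof. by []. Qed.

Lemma mxv_scale A k v : mxv A (scalev k v) = scalev k (mxv A v).
Proof. by rewrite /mxv /scalev /=; congr (_, _); ring. Qed.

Lemma det2_mxv A v w : det2 (mxv A v) (mxv A w) = det22 A * det2 v w.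
Proof. by rewrite /det2 /mxv /det22 /=; ring. Qed.

Lemma lift_ord0 : lift ord0 ord0 = ord_max :> 'I_2.
Proof. exact: val_inj. Qed.

Lemma mxv_mul A B v : mxv B (mxv A v) = mxv (B *m A) v.
Proof.
by rewrite /mxv /= !mxE !big_ord_recl !big_ord0 !lift_ord0 /=; congr (_, _); ring.
Qed.

Lemma det22_mul A B : det22 (B *m A) = det22 B * det22 A.
Proof. by rewrite /det22 !mxE !big_ord_recl !big_ord0 !lift_ord0 /=; ring. Qed.

Lemma det22_neq0 A : A \in unitmx -> det22 A != 0.
Proof.
move=> uA; have := det22_mul A (invmx A); rewrite mulVmx //.
have -> : det22 1%:M = 1 by rewrite /det22 !mxE /= mulr1 mulr0 subr0.
by move=> e; apply/eqP => A0; move: e; rewrite A0 mulr0 => /eqP; rewrite oner_eq0.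
Qed.

Lemma mxv_neq0 A v : A \in unitmx -> v != (0, 0) -> mxv A v != (0, 0).
Proof.
move=> uA; apply: contra => /eqP Av0.
have idv : mxv (invmx A *m A) v = v.
  rewrite (mulVmx uA); case: v {Av0} => a b; rewrite /mxv !mxE /=.
  by congr (_, _); ring.
by rewrite -idv -mxv_mul Av0 /mxv /= !mulr0 !addr0.
Qed.

Lemma mob_inj A : A \in unitmx -> injective (mob A).
Proof.
move=> uA z1 z2; rewrite !mobE => /proj_eq.
rewrite !mxv_neq0 ?coords_neq0 // det2_mxv => /(_ isT isT) /eqP.
by rewrite mulf_eq0 (negbTE (det22_neq0 uA)) det2_coords => /eqP.
Qed.

Lemma coords_mob A z : A \in unitmx ->
  coords (mob A z) = scalev (normc (mxv A (coords z)))^-1 (mxv A (coords z)).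
Proof. by move=> uA; rewrite mobE coords_proj_inv // mxv_neq0 ?coords_neq0. Qed.

Lemma perm_mob A s : A \in unitmx -> uniq s ->
  (forall q, (mob A q \in s) = (q \in s)) -> perm_eq (map (mob A) s) s.
Proof.
move=> uA us sA; have um : uniq (map (mob A) s) by rewrite (map_inj_uniq (mob_inj uA)).
apply: uniq_perm => //.
have [] := @uniq_min_size _ (map (mob A) s) s um; last by [].
  by move=> x /mapP [y ys ->]; rewrite sA.
by rewrite size_map.
Qed.

End LinearAction.

Section BinaryForms.
Variable F : closedFieldType.
Implicit Types (v w : F * F) (p q : {poly F}).

Definition isForm d (g : F * F -> F) :=
  exists p : {poly F}, (size p <= d.+1)%N /\ forall v, g v = hev d p v.

Lemma hevD d p q v : hev d (p + q) v = hev d p v + hev d q v.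
Proof. by rewrite /hev -big_split; apply: eq_bigr => i _; rewrite coefD !mulrDl. Qed.

Lemma hevZ d c p v : hev d (c *: p) v = c * hev d p v.
Proof. by rewrite /hev mulr_sumr; apply: eq_bigr => i _; rewrite coefZ -!mulrA. Qed.

Lemma hevMy d p v : (size p <= d.+1)%N -> hev d.+1 p v = v.2 * hev d p v.
Proof.
move=> sp; rewrite /hev big_ord_recr /= nth_default // !mul0r addr0 mulr_sumr.
by apply: eq_bigr => i _ /=; rewrite (subSn (ltnSE (ltn_ord i))) exprS; ring.
Qed.

Lemma hevMx d p v : hev d.+1 ('X * p) v = v.1 * hev d p v.
Proof.
rewrite /hev big_ord_recl /= coefXM eqxx !mul0r add0r mulr_sumr.
by apply: eq_bigr => i _ /=; rewrite coefXM /= subSS /bump /= add1n exprS; ring.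
Qed.

Lemma form_scale d g k v : isForm d g -> g (scalev k v) = k ^+ d * g v.
Proof.
move=> [p [sp ep]]; rewrite !ep /hev mulr_sumr; apply: eq_bigr => i _ /=.
have -> : k ^+ d = k ^+ i * k ^+ (d - i).
  by rewrite -exprD subnKC // (ltnSE (ltn_ord i)).
by rewrite !exprMn; ring.
Qed.

Lemma form_ext d g g' : isForm d g -> g =1 g' -> isForm d g'.
Proof. by move=> [p [sp e]] e'; exists p; split=> // v; rewrite -e'. Qed.

Lemma form0 d : isForm d (fun _ => 0).
Proof.
exists 0; rewrite size_poly0; split=> // v.
by rewrite /hev big1 // => i _; rewrite coef0 !mul0r.
Qed.

Lemma form1 : isForm 0 (fun _ => 1).
Proof.
exists 1; rewrite size_poly1; split=> // v.
by rewrite /hev big_ord_recl big_ord0 coef1 /= !expr0 !mulr1 addr0.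
Qed.

Lemma formD d g h : isForm d g -> isForm d h -> isForm d (fun v => g v + h v).
Proof.
move=> [p [sp ep]] [q [sq eq]]; exists (p + q); split; last by move=> v; rewrite hevD ep eq.
by apply: leq_trans (size_polyD _ _) _; rewrite geq_max sp sq.
Qed.

Lemma formZ d c g : isForm d g -> isForm d (fun v => c * g v).
Proof.
move=> [p [sp ep]]; exists (c *: p); split; last by move=> v; rewrite hevZ ep.
exact: leq_trans (size_scale_leq _ _) _.
Qed.

Lemma formMx d g : isForm d g -> isForm d.+1 (fun v => v.1 * g v).
Proof.
move=> [p [sp ep]]; exists ('X * p); split; last by move=> v; rewrite hevMx ep.
by apply: leq_trans (size_polyMleq _ _) _; rewrite size_polyX.
Qed.

Lemma formMy d g : isForm d g -> isForm d.+1 (fun v => v.2 * g v).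
Proof.
move=> [p [sp ep]]; exists p; split; first exact: leqW.
by move=> v; rewrite hevMy // ep.
Qed.

Lemma formMdet2 d u g : isForm d g -> isForm d.+1 (fun v => det2 v u * g v).
Proof.
move=> fg; apply: (@form_ext _ (fun v => v.1 * (u.2 * g v) + v.2 * (- u.1 * g v))).
  by apply: formD; [apply: formMx | apply: formMy]; apply: formZ.
by move=> v; rewrite /det2; ring.
Qed.

Lemma form_sum d (T : eqType) (r : seq T) (G : T -> F * F -> F) :
  (forall x, x \in r -> isForm d (G x)) ->
  isForm d (fun v => \sum_(x <- r) G x v).
Proof.
elim: r => [|a r IH] Gr; first by apply: (form_ext (form0 d)) => v; rewrite big_nil.
apply: (@form_ext _ (fun v => G a v + \sum_(x <- r) G x v)); last first.
  by move=> v; rewrite big_cons.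
apply: formD; first by apply: Gr; rewrite mem_head.
by apply: IH => x xr; apply: Gr; rewrite in_cons xr orbT.
Qed.

Lemma form_prod_det2 (T : Type) (r : seq T) (P : pred T) (u : T -> F * F) :
  isForm (count P r) (fun v => \prod_(x <- r | P x) det2 v (u x)).
Proof.
elim: r => [|a r IH] /=; first by apply: (form_ext form1) => v; rewrite big_nil.
case Pa: (P a) => /=.
  by apply: (form_ext (formMdet2 (u a) IH)) => v; rewrite big_cons Pa.
by apply: (form_ext IH) => v; rewrite big_cons Pa.
Qed.

End BinaryForms.

Section LagrangeField.
Variable F : closedFieldType.
Hypothesis charF0 : [pchar F] =i pred0.
Implicit Types (v w : F * F) (z l : P1 F) (A : 'M[F]_2) (s : seq (P1 F)).

Lemma natf_pos_neq0 n : (0 < n)%N -> n%:R != 0 :> F.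
Proof. by move=> n0; apply/negP => /(natf0_pchar n0) [p]; rewrite charF0. Qed.

Definition lagr_weight s l v := \prod_(m <- s | m != l) det2 v (coords m).

(* The Lagrange field of [s], one coordinate ([g] = fst or snd) at a time. *)
Definition lagr_comp (g : F * F -> F) s v :=
  \sum_(l <- s) lagr_weight s l v * g (coords l).

Definition lagr s v := (lagr_comp fst s v, lagr_comp snd s v).

Definition lagr_map s z := proj (lagr s (coords z)).

Lemma count_neq s l : uniq s -> l \in s -> count (fun m => m != l) s = (size s).-1.
Proof.
by move=> us ls; have := count_predC (pred1 l) s; rewrite count_uniq_mem // ls add1n => <-.
Qed.

Lemma form_lagr_comp g s : uniq s -> isForm (size s).-1 (lagr_comp g s).
Proof.
move=> us; apply: form_sum => l ls; rewrite -(count_neq us ls).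
apply: (@form_ext _ _ (fun v => g (coords l) * lagr_weight s l v)).
  exact: formZ (form_prod_det2 s (fun m => m != l) (@coords F)).
by move=> v; rewrite mulrC.
Qed.

Lemma lagr_scale s k v : uniq s -> lagr s (scalev k v) = scalev (k ^+ (size s).-1) (lagr s v).
Proof. by move=> us; rewrite /lagr /scalev /= !(form_scale _ _ (form_lagr_comp _ us)). Qed.

Lemma det2_lagr s v : uniq s ->
  det2 v (lagr s v) = (\prod_(m <- s) det2 v (coords m)) *+ size s.
Proof.
move=> us; rewrite -[size s]count_predT -iter_addr_0 -big_const_seq.
rewrite /det2 /lagr /lagr_comp /= !mulr_sumr -sumrB big_seq [RHS]big_seq.
by apply: eq_bigr => l ls; rewrite (bigD1_seq l) //= /lagr_weight /det2; ring.
Qed.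

Lemma lagr_at s l v : uniq s -> l \in s -> det2 v (coords l) = 0 ->
  lagr s v = scalev (lagr_weight s l v) (coords l).
Proof.
move=> us ls vl; suff comp g : lagr_comp g s v = lagr_weight s l v * g (coords l).
  by rewrite /lagr !comp.
rewrite /lagr_comp (bigD1_seq l) //= big1 ?addr0 // => m ml.
suff -> : lagr_weight s m v = 0 by rewrite mul0r.
by apply/eqP; rewrite prodf_seq_eq0; apply/hasP; exists l; rewrite // eq_sym ml vl /=.
Qed.

Lemma lagr_neq0 s v : uniq s -> (0 < size s)%N -> v != (0, 0) -> lagr s v != (0, 0).
Proof.
move=> us s0 v0; have [/hasP [l ls /eqP vl] | ] :=
  boolP (has (fun m => det2 v (coords m) == 0) s).
  rewrite (lagr_at us ls vl) scalev_neq0 ?coords_neq0 //.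
  have vl' : proj v = l by rewrite -[l]proj_coords; apply/proj_eq; rewrite ?coords_neq0.
  rewrite prodf_seq_neq0; apply/allP => m _; apply/implyP => ml.
  by rewrite (coords_proj v0) vl' det2_scalel mulf_neq0 ?normc_neq0 // det2_coords eq_sym.
rewrite -all_predC => /allP vs; apply: contraNneq (_ : det2 v (lagr s v) != 0).
  by move=> ->; rewrite /det2 !mulr0 subr0.
rewrite det2_lagr // -mulr_natr mulf_neq0 ?natf_pos_neq0 //.
by rewrite prodf_seq_neq0; apply/allP => m ms; apply: vs.
Qed.

Lemma lagr_map_fix s z : uniq s -> (0 < size s)%N -> lagr_map s z = z <-> z \in s.
Proof.
move=> us s0; rewrite /lagr_map -{2}(proj_coords z).
rewrite (proj_eq (lagr_neq0 us s0 (coords_neq0 z)) (coords_neq0 z)) det2C det2_lagr //.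
rewrite -mulr_natr; split.
  move/eqP; rewrite oppr_eq0 mulf_eq0 (negbTE (natf_pos_neq0 s0)) orbF prodf_seq_eq0.
  by move=> /hasP [m ms]; rewrite det2_coords => /eqP ->.
move=> zs; apply/eqP; rewrite oppr_eq0 mulf_eq0 prodf_seq_eq0; apply/orP; left.
by apply/hasP; exists z => //=; rewrite det2_coords.
Qed.

Lemma lagr_map_morphism s : uniq s -> (0 < size s)%N -> is_P1_morphism (lagr_map s).
Proof.
move=> us s0; have [p [sp ep]] := form_lagr_comp fst us.
have [q [sq eq]] := form_lagr_comp snd us.
exists (size s).-1, p, q; split => //; last by move=> z; rewrite /lagr_map /lagr ep eq.
by move=> v v0; rewrite -ep -eq; apply: lagr_neq0.
Qed.

(* The proportionality factor between D(Av) and A D(v). *)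
Definition lagr_factor A s :=
  (\prod_(m <- s) (normc (mxv A (coords m)))^-1) * det22 A ^+ (size s).-1.

Lemma lagr_factor_neq0 A s : A \in unitmx -> lagr_factor A s != 0.
Proof.
move=> uA; rewrite /lagr_factor mulf_neq0 ?expf_neq0 ?det22_neq0 //.
rewrite prodf_seq_neq0; apply/allP => m _ /=.
by rewrite invr_neq0 // normc_neq0 // mxv_neq0 ?coords_neq0.
Qed.

Lemma lagr_comp_mxv A s g : A \in unitmx -> uniq s ->
  (forall q, (mob A q \in s) = (q \in s)) -> (forall k w, g (scalev k w) = k * g w) ->
  forall v, lagr_comp g s (mxv A v) = lagr_factor A s * lagr_comp (fun w => g (mxv A w)) s v.
Proof.
move=> uA us sA gl v; have ps : perm_eq s (map (mob A) s) by rewrite perm_sym perm_mob.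
have weightA l v' : lagr_weight s (mob A l) v' =
    \prod_(m <- s | m != l) det2 v' (coords (mob A m)).
  rewrite /lagr_weight (perm_big _ ps) big_map.
  by apply: eq_bigl => m; rewrite (inj_eq (mob_inj uA)).
rewrite /lagr_comp (perm_big _ ps) big_map mulr_sumr big_seq [RHS]big_seq.
apply: eq_bigr => l ls; rewrite weightA.
rewrite (eq_bigr (fun m => (normc (mxv A (coords m)))^-1 * (det22 A * det2 v (coords m))));
  last by move=> m _; rewrite coords_mob // det2_scaler det2_mxv.
rewrite big_split big_split /= -/(lagr_weight s l v) big_const_seq iter_mulr_1 count_neq //.
by rewrite coords_mob // gl /lagr_factor (bigD1_seq l) //=; ring.
Qed.

Lemma lagr_mxv A s v : A \in unitmx -> uniq s -> (forall q, (mob A q \in s) = (q \in s)) ->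
  lagr s (mxv A v) = scalev (lagr_factor A s) (mxv A (lagr s v)).
Proof.
move=> uA us sA; have comp_lin a b : lagr_comp (fun w => a * w.1 + b * w.2) s v =
    a * lagr_comp fst s v + b * lagr_comp snd s v.
  by rewrite /lagr_comp !mulr_sumr -big_split; apply: eq_bigr => l _ /=; ring.
by rewrite /lagr /scalev /= !(lagr_comp_mxv uA us sA) // /mxv /= !comp_lin.
Qed.

Lemma lagr_map_equivariant A s z : A \in unitmx -> uniq s -> (0 < size s)%N ->
  (forall q, (mob A q \in s) = (q \in s)) -> lagr_map s (mob A z) = mob A (lagr_map s z).
Proof.
move=> uA us s0 sA; rewrite /lagr_map !mobE.
have Az0 := mxv_neq0 uA (coords_neq0 z).
have Dz0 := lagr_neq0 us s0 (coords_neq0 z).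
rewrite coords_proj_inv // lagr_scale // proj_scalev ?expf_neq0 ?invr_neq0 ?normc_neq0 //.
rewrite lagr_mxv // proj_scalev ?lagr_factor_neq0 //.
by rewrite coords_proj_inv // mxv_scale proj_scalev // invr_neq0 // normc_neq0.
Qed.

End LagrangeField.

Section FixedPoints.
Variable F : closedFieldType.

Lemma hev_inf d (p : {poly F}) : hev d p (1, 0) = p`_d.
Proof.
rewrite /hev big_ord_recr /= subnn !expr0 expr1n !mulr1 big1 ?add0r // => i _.
by rewrite expr0n subn_eq0 leqNgt ltn_ord /= mulr0.
Qed.

Lemma hev_affine d (p : {poly F}) t : (size p <= d.+1)%N -> hev d p (t, 1) = p.[t].
Proof.
move=> sp; rewrite (horner_coef_wide _ sp) /hev.
by apply: eq_bigr => i _ /=; rewrite expr1n mulr1.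
Qed.

(* Every morphism P^1 -> P^1 has a fixed point: if infinity is not fixed, the
   affine fixed points are the roots of X Q - P, a polynomial of degree d+1. *)
Lemma morphism_has_fixed_point (f : P1 F -> P1 F) : is_P1_morphism f -> exists z, f z = z.
Proof.
move=> [d [p [q [sp sq nz ef]]]].
have [finf|] := f None =P None; first by exists None.
rewrite ef /= !hev_inf /proj /=; case: eqP => // /eqP qd _.
have size_q : size q = d.+1.
  apply/eqP; rewrite eqn_leq sq /=; apply: contraR qd; rewrite -ltnNge ltnS => h.
  by rewrite nth_default.
have size_r : size ('X * q - p) = d.+2.
  rewrite size_polyDl mulrC size_mulX -?size_poly_eq0 ?size_q // size_polyN.
  exact: leq_ltn_trans sp _.
have [t] : exists t, root ('X * q - p) t by apply/closed_rootP; rewrite size_r.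
rewrite /root !hornerE subr_eq0 => /eqP pt.
exists (Some t); rewrite ef /= !hev_affine // /proj /=.
have [qt|/eqP qt] := eqP; last by rewrite -pt mulfK.
have := nz (t, 1); rewrite !hev_affine // qt -pt qt mulr0 eqxx pair_neq0 /= oner_eq0.
by rewrite orbT => /(_ isT).
Qed.

End FixedPoints.

Unset Implicit Arguments.

Theorem mainTheorem12 (F : closedFieldType) (charF0 : [pchar F] =i pred0)
    (H : seq 'M[F]_2) (HH : finite_subgroup_PGL2 H) (L : seq (P1 F)) :
  ((exists q, q \in L) /\
   (forall A, A \in H -> forall q : P1 F, (mob A q \in L) = (q \in L)))
  <->
  (exists delta : P1 F -> P1 F,
     [/\ is_P1_morphism delta,
         (forall A, A \in H -> forall q : P1 F, delta (mob A q) = mob A (delta q)) &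
         (forall q : P1 F, q \in L <-> delta q = q)]).
Proof.
have [unitH _ _ _] := HH; split.
- move=> [[q0 q0L] invL]; set s := undup L.
  have us : uniq s := undup_uniq L.
  have s0 : (0 < size s)%N by rewrite -has_predT; apply/hasP; exists q0; rewrite ?mem_undup.
  have invs A : A \in H -> forall q, (mob A q \in s) = (q \in s).
    by move=> AH q; rewrite !mem_undup invL.
  exists (lagr_map s); split.
  + exact: lagr_map_morphism.
  + by move=> A AH q; apply: lagr_map_equivariant; [|exact: unitH| | |exact: invs].
  + by move=> q; rewrite -mem_undup lagr_map_fix.
- move=> [delta [morph equiv fixL]]; split.
  + by have [z fz] := morphism_has_fixed_point morph; exists z; apply/fixL.
  + move=> A AH q; apply/idP/idP => /fixL fq; apply/fixL.
    * by apply: (mob_inj (unitH A AH)); rewrite -equiv.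
    * by rewrite equiv // fq.
Qed.
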